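(* The functor $i:\overline{\mathrm{Pro}}(\mathcal{C})\to \mathrm{Pro}(\mathcal{C})$ is full.
   Context: Let $\mathcal{C}$ be a category. $\mathrm{Pro}(\mathcal{C})$ has objects diagrams $I\to\mathcal{C}$ with $I$ small directed and $\mathrm{Hom}(X,Y)=\lim_s\operatorname{colim}_t\mathrm{Hom}_{\mathcal{C}}(X_t,Y_s)$. $\overline{\mathrm{Pro}}(\mathcal{C})$ has objects $F:A\to\mathcal{C}$ with $A$ a cofinite directed poset of infinite height (poset as category with $u\to v$ iff $u\ge v$), and morphisms $F^A\to G^B$ the connected components $[\alpha,\phi]$ of the poset of pairs $(\alpha,\phi)$, $\alpha:B\to A$ strictly increasing, $\phi:F\circ\alpha\to G$ natural, ordered by $(\alpha',\phi')\ge(\alpha,\phi)$ iff $\alpha'\ge\alpha$ pointwise and $\phi'_b=\phi_b\circ F(\alpha'(b)\to\alpha(b))$. The functor $i$ is the identity on objects and sends $[\alpha,\phi]$ to the pro-morphism represented by the maps $\phi_b:F_{\alpha(b)}\to G_b$, $b\in B$. *)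

From Stdlib Require Import List Classical.
Set Implicit Arguments.
Unset Strict Implicit.

Record Category := {
  Ob :> Type;
  Hom : Ob -> Ob -> Type;
  comp : forall a b c : Ob, Hom b c -> Hom a b -> Hom a c;
  idm : forall a : Ob, Hom a a;
  comp_idl : forall a b (f : Hom a b), comp (idm b) f = f;
  comp_idr : forall a b (f : Hom a b), comp f (idm a) = f;
  comp_assoc : forall a b c d (f : Hom c d) (g : Hom b c) (h : Hom a b),
      comp f (comp g h) = comp (comp f g) h
}.
Arguments Hom {_} _ _.
Arguments comp {_ _ _ _} _ _.
Arguments idm {_} _.

Record Poset := {
  pcar :> Type;
  ple : pcar -> pcar -> Prop;
  ple_refl : forall a, ple a a;
  ple_antisym : forall a b, ple a b -> ple b a -> a = b;
  ple_trans : forall a b c, ple a b -> ple b c -> ple a c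
}.
Arguments ple {p} _ _.

Definition plt {A : Poset} (a b : A) : Prop := ple a b /\ a <> b.

Definition directed (A : Poset) : Prop :=
  (exists a : A, True) /\ forall a b : A, exists c : A, ple a c /\ ple b c.

Definition cofinite (A : Poset) : Prop :=
  forall a : A, exists l : list A, forall b : A, ple b a -> In b l.

Definition infinite_height (A : Poset) : Prop :=
  forall n : nat, exists f : nat -> A, forall k, k < n -> plt (f k) (f (S k)).

(** A functor A -> C, with A a poset seen as a category (u -> v iff u >= v). *)
Record Diagram (C : Category) (A : Poset) := {
  dob :> A -> C;
  dmap : forall u v : A, ple v u -> Hom (dob u) (dob v);
  dmap_id : forall u (h : ple u u), dmap h = idm (dob u);
  dmap_comp : forall u v w (h1 : ple v u) (h2 : ple w v) (h3 : ple w u),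
      dmap h3 = comp (dmap h2) (dmap h1)
}.
Arguments dmap {C A} d {u v} _.

Record ProObj (C : Category) := {
  pro_idx : Poset;
  pro_dir : directed pro_idx;
  pro_diag : Diagram C pro_idx
}.

Section ProHom.
Variables (C : Category) (X Y : ProObj C).
Let I := pro_idx X.
Let J := pro_idx Y.
Let Xd := pro_diag X.
Let Yd := pro_diag Y.

(** representatives of elements of colim_t Hom(X_t, Y_s) *)
Definition germ (s : J) := { t : I & Hom (Xd t) (Yd s) }.

(** the identification in the filtered colimit colim_t Hom(X_t, Y_s) *)
Definition germ_eq (s : J) (g g' : germ s) : Prop :=
  exists (t'' : I) (h : ple (projT1 g) t'') (h' : ple (projT1 g') t''),
    comp (projT2 g) (dmap Xd h) = comp (projT2 g') (dmap Xd h').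

Definition germ_post (s s' : J) (h : ple s' s) (g : germ s) : germ s' :=
  existT _ (projT1 g) (comp (dmap Yd h) (projT2 g)).

(** elements of lim_s colim_t Hom(X_t, Y_s) *)
Record ProHom := {
  ph_fam : forall s : J, germ s;
  ph_compat : forall (s s' : J) (h : ple s' s),
      germ_eq (germ_post h (ph_fam s)) (ph_fam s')
}.

Definition ProHom_eq (g g' : ProHom) : Prop :=
  forall s : J, germ_eq (ph_fam g s) (ph_fam g' s).
End ProHom.

Record BarProObj (C : Category) := {
  bp_idx : Poset;
  bp_dir : directed bp_idx;
  bp_cofinite : cofinite bp_idx;
  bp_infheight : infinite_height bp_idx;
  bp_diag : Diagram C bp_idx
}.

Definition i_obj (C : Category) (X : BarProObj C) : ProObj C :=
  {| pro_idx := bp_idx X; pro_dir := bp_dir X; pro_diag := bp_diag X |}.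

Definition strictly_increasing (A B : Poset) (f : B -> A) : Prop :=
  forall b b' : B, plt b b' -> plt (f b) (f b').

Record BarPair (C : Category) (X Y : BarProObj C) := {
  bpa : bp_idx Y -> bp_idx X;
  bpa_incr : strictly_increasing bpa;
  bpphi : forall b, Hom (bp_diag X (bpa b)) (bp_diag Y b);
  bpphi_nat : forall (b b' : bp_idx Y) (h : ple b' b) (h' : ple (bpa b') (bpa b)),
      comp (dmap (bp_diag Y) h) (bpphi b) = comp (bpphi b') (dmap (bp_diag X) h')
}.

(** the order on pairs; morphisms of \bar{Pro}(C) are its connected components *)
Definition BarPair_le (C : Category) (X Y : BarProObj C) (p q : BarPair X Y) : Prop :=
  exists H : forall b, ple (bpa p b) (bpa q b),
    forall b, bpphi q b = comp (bpphi p b) (dmap (bp_diag X) (H b)).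

Lemma strictly_increasing_mono (A B : Poset) (f : B -> A) :
  strictly_increasing f -> forall b' b : B, ple b' b -> ple (f b') (f b).
Proof.
  intros Hf b' b h.
  destruct (Classical_Prop.classic (b' = b)) as [e|ne].
  - subst; apply ple_refl.
  - exact (proj1 (Hf b' b (conj h ne))).
Qed.

Lemma i_pair_compat (C : Category) (X Y : BarProObj C) (p : BarPair X Y) :
  forall (s s' : bp_idx Y) (h : ple s' s),
    germ_eq (X := i_obj X) (Y := i_obj Y)
      (germ_post (X := i_obj X) (Y := i_obj Y) h
         (existT (fun t => Hom (bp_diag X t) (bp_diag Y s)) (bpa p s) (bpphi p s)))
      (existT (fun t => Hom (bp_diag X t) (bp_diag Y s')) (bpa p s') (bpphi p s')).
Proof.
  intros s s' h.
  pose proof (strictly_increasing_mono (bpa_incr p) h) as h'.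
  exists (bpa p s), (ple_refl _), h'; simpl.
  rewrite dmap_id, comp_idr.
  apply bpphi_nat.
Qed.

Definition i_pair (C : Category) (X Y : BarProObj C) (p : BarPair X Y)
  : ProHom (i_obj X) (i_obj Y) :=
  @Build_ProHom C (i_obj X) (i_obj Y) (fun b : bp_idx Y =>
    existT (fun t => Hom (bp_diag X t) (bp_diag Y b)) (bpa p b) (bpphi p b))
    (i_pair_compat p).

(* Let g be a pro-morphism, represented by maps f_b : X_{t b} -> Y_b.  The
   index poset of Y is well-founded (it is cofinite), so we may choose alpha
   by well-founded recursion: alpha b lies strictly above alpha b' for every
   b' < b, and above the finitely many indices at which the compatibilities
   of g between b and its predecessors are witnessed.  Such a choice exists
   because the index poset of X is directed and, being cofinite of infinite
   height, has no maximal element.  Then phi_b := f_b o X(alpha b -> t b) is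
   natural and represents g. *)
From Stdlib Require Import PeanoNat List Lia Classical FunctionalExtensionality
  IndefiniteDescription.

Section PosetFacts.
Context {A : Poset}.

Lemma plt_ple_trans {a b c : A} : plt a b -> ple b c -> plt a c.
Proof.
  intros [hab nab] hbc; split; [exact (ple_trans hab hbc)|].
  intros ->; apply nab, ple_antisym; assumption.
Qed.

Lemma ple_plt_trans {a b c : A} : ple a b -> plt b c -> plt a c.
Proof.
  intros hab [hbc nbc]; split; [exact (ple_trans hab hbc)|].
  intros ->; apply nbc, ple_antisym; assumption.
Qed.

Lemma chain_plt {f : nat -> A} {n : nat} :
  (forall k, k < n -> plt (f k) (f (S k))) ->
  forall i j, i < j -> j <= n -> plt (f i) (f j).
Proof.
  intros Hf i j; induction j as [|j IH]; intros Hij Hjn; [lia|].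
  destruct (Nat.eq_dec i j) as [->|ne]; [apply Hf; lia|].
  apply (plt_ple_trans (IH ltac:(lia) ltac:(lia))), Hf; lia.
Qed.

(* A chain of length |pred(a)| + 1 cannot lie below a, by counting. *)
Lemma exists_plt :
  directed A -> cofinite A -> infinite_height A -> forall a : A, exists a', plt a a'.
Proof.
  intros [_ Hdir] Hcof Hh a.
  destruct (Hcof a) as [l Hl].
  set (n := S (length l)).
  destruct (Hh n) as [f Hf].
  destruct (Hdir a (f n)) as [d [Had Hfd]].
  exists d; split; [exact Had|intros <-].
  assert (Hincl : incl (map f (seq 0 (S n))) l).
  { intros x Hx; apply in_map_iff in Hx as [k [<- Hk]]; apply in_seq in Hk.
    apply Hl; destruct (Nat.eq_dec k n) as [->|ne]; [exact Hfd|].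
    exact (ple_trans (proj1 (chain_plt Hf k n ltac:(lia) (le_n n))) Hfd). }
  assert (Hnodup : NoDup (map f (seq 0 (S n)))).
  { apply NoDup_map_NoDup_ForallPairs; [|apply seq_NoDup].
    intros i j Hi Hj e; apply in_seq in Hi, Hj.
    destruct (Nat.lt_total i j) as [lt|[eq|gt]]; [|exact eq|]; exfalso.
    - exact (proj2 (chain_plt Hf i j lt ltac:(lia)) e).
    - exact (proj2 (chain_plt Hf j i gt ltac:(lia)) (eq_sym e)). }
  pose proof (NoDup_incl_length Hnodup Hincl) as Hlen.
  rewrite length_map, length_seq in Hlen; unfold n in Hlen; lia.
Qed.

Lemma remove_member {T : Type} {x : T} {l : list T} :
  In x l -> exists l', length l' < length l /\ forall y, In y l -> y <> x -> In y l'.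
Proof.
  induction l as [|a l IH]; intros Hx; [destruct Hx|].
  destruct (classic (a = x)) as [<-|ne].
  - exists l; split; [simpl; lia|].
    intros y [<-|Hy] Hya; [congruence|exact Hy].
  - destruct Hx as [<-|Hx]; [congruence|].
    destruct (IH Hx) as [l' [Hlen Hin]].
    exists (a :: l'); split; [simpl; lia|].
    intros y [<-|Hy] Hyx; [left|right; apply Hin]; auto.
Qed.

Lemma plt_wf : cofinite A -> well_founded (@plt A).
Proof.
  intros Hcof b; destruct (Hcof b) as [l Hl].
  generalize (le_n (length l)); generalize (length l) at 2.
  intros n Hlen; revert b l Hlen Hl; induction n as [|n IH]; intros b l Hlen Hl.
  - destruct l; [destruct (Hl b (ple_refl _))|simpl in Hlen; lia].
  - constructor; intros b' [hb'b nb'b].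
    destruct (remove_member (Hl b (ple_refl _))) as [l' [Hlen' Hin]].
    apply (IH b' l'); [lia|].
    intros c hcb'; apply Hin; [exact (Hl c (ple_trans hcb' hb'b))|].
    intros ->; apply nb'b, ple_antisym; assumption.
Qed.

Lemma directed_list_meet {T : Type} (P : T -> A -> Prop) (l : list T) :
  directed A ->
  (forall c, In c l -> exists a, P c a) ->
  (forall c a a', P c a -> ple a a' -> P c a') ->
  exists a, forall c, In c l -> P c a.
Proof.
  intros [[a0 _] Hdir] Hne Hup; induction l as [|c0 l IH].
  - exists a0; intros c [].
  - destruct IH as [a1 Ha1]; [intros c Hc; apply Hne; right; exact Hc|].
    destruct (Hne c0 (or_introl eq_refl)) as [a2 Ha2].
    destruct (Hdir a1 a2) as [u [Hu1 Hu2]].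
    exists u; intros c [<-|Hc]; eapply Hup; eauto.
Qed.
End PosetFacts.

Section StrictlyIncreasingChoice.
Context {A B : Poset}.
Hypotheses (dirA : directed A) (unbA : forall a : A, exists a', plt a a')
  (cofB : cofinite B).
Variable R : B -> A -> Prop.
Hypotheses (R_nonempty : forall b, exists a, R b a)
  (R_upward : forall b a a', R b a -> ple a a' -> R b a').

Lemma strict_upper_bound_step (b : B) (rec : forall b', plt b' b -> A) :
  exists a, R b a /\ forall b' (h : plt b' b), plt (rec b' h) a.
Proof.
  destruct (cofB b) as [l Hl].
  destruct (directed_list_meet
              (fun c a => forall h : plt c b, ple (rec c h) a) l dirA)
    as [a1 Ha1].
  - intros c _; destruct (classic (plt c b)) as [hc|hc].
    + exists (rec c hc); intros h; rewrite (proof_irrelevance _ h hc); apply ple_refl.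
    + destruct dirA as [[a0 _] _]; exists a0; intros h; contradiction.
  - intros c a a' Ha Haa' h; exact (ple_trans (Ha h) Haa').
  - destruct (R_nonempty b) as [a2 Ha2].
    destruct (proj2 dirA a1 a2) as [u [Hu1 Hu2]].
    destruct (unbA u) as [a [Hua nua]].
    exists a; split; [exact (R_upward _ _ _ Ha2 (ple_trans Hu2 Hua))|].
    intros b' h; apply (ple_plt_trans (Ha1 b' (Hl b' (proj1 h)) h)).
    exact (ple_plt_trans Hu1 (conj Hua nua)).
Qed.

Lemma strictly_increasing_choice :
  exists alpha : B -> A, strictly_increasing alpha /\ forall b, R b (alpha b).
Proof.
  pose (step (b : B) (rec : forall b', plt b' b -> A) :=
          proj1_sig (constructive_indefinite_description _
                       (strict_upper_bound_step b rec))).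
  pose (alpha := Fix (plt_wf cofB) (fun _ => pcar A) step).
  assert (Hunfold : forall b, alpha b = step b (fun b' _ => alpha b')).
  { intros b; unfold alpha; rewrite Fix_eq; [reflexivity|].
    intros x r1 r2 Hr; f_equal.
    apply functional_extensionality_dep; intros y.
    apply functional_extensionality_dep; intros p; apply Hr. }
  assert (Hspec : forall b, R b (alpha b) /\
                   forall b', plt b' b -> plt (alpha b') (alpha b)).
  { intros b; rewrite (Hunfold b); unfold step.
    destruct (constructive_indefinite_description _ _) as [a [Ha Hlt]]; simpl.
    split; [exact Ha|intros b' h; exact (Hlt b' h)]. }
  exists alpha; split.
  - intros b' b h; exact (proj2 (Hspec b) b' h).
  - intros b; exact (proj1 (Hspec b)).
Qed.
End StrictlyIncreasingChoice.

Section DiagramFacts.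
Context {C : Category} {A : Poset} (X : Diagram C A).

Lemma dmap_irrelevant {u v : A} (h h' : ple v u) : dmap X h = dmap X h'.
Proof. rewrite (dmap_comp X h' (ple_refl v) h), dmap_id; apply comp_idl. Qed.

Lemma comp_dmap_lift {c : C} {t t' a a' : A}
  {f : Hom (X t) c} {f' : Hom (X t') c} {h : ple t a} {h' : ple t' a}
  (k : ple a a') (k1 : ple t a') (k2 : ple t' a') :
  comp f (dmap X h) = comp f' (dmap X h') ->
  comp f (dmap X k1) = comp f' (dmap X k2).
Proof.
  intros E.
  rewrite (dmap_comp X k h k1), (dmap_comp X k h' k2), !comp_assoc, E.
  reflexivity.
Qed.
End DiagramFacts.

Section RepresentingPair.
Context {C : Category} {X Y : BarProObj C} (g : ProHom (i_obj X) (i_obj Y)).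

Definition germ_index (b : bp_idx Y) : bp_idx X := projT1 (ph_fam g b).

Definition germ_map (b : bp_idx Y) : Hom (bp_diag X (germ_index b)) (bp_diag Y b) :=
  projT2 (ph_fam g b).

(* [a] witnesses, in the colimit over X, the compatibility of [g] between [b] and [b']. *)
Definition compatible_above (b b' : bp_idx Y) (a : bp_idx X) : Prop :=
  forall h : ple b' b,
    exists (hb : ple (germ_index b) a) (hb' : ple (germ_index b') a),
      comp (comp (dmap (bp_diag Y) h) (germ_map b)) (dmap (bp_diag X) hb)
      = comp (germ_map b') (dmap (bp_diag X) hb').

Definition compatible_at (b : bp_idx Y) (a : bp_idx X) : Prop :=
  forall b', compatible_above b b' a.

Lemma compatible_above_mono {b b' : bp_idx Y} {a a' : bp_idx X} :
  compatible_above b b' a -> ple a a' -> compatible_above b b' a'.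
Proof.
  intros Ha Haa' h; destruct (Ha h) as [hb [hb' E]].
  exists (ple_trans hb Haa'), (ple_trans hb' Haa').
  exact (comp_dmap_lift (bp_diag X) Haa' _ _ E).
Qed.

Lemma compatible_above_exists (b b' : bp_idx Y) : exists a, compatible_above b b' a.
Proof.
  destruct (classic (ple b' b)) as [h0|nh].
  - destruct (ph_compat g h0) as [t'' [h1 [h2 E]]].
    exists t''; intros h; rewrite (dmap_irrelevant (bp_diag Y) h h0); eauto.
  - destruct (bp_dir X) as [[a0 _] _]; exists a0; intros h; contradiction.
Qed.

Lemma compatible_at_mono {b : bp_idx Y} {a a' : bp_idx X} :
  compatible_at b a -> ple a a' -> compatible_at b a'.
Proof. intros Ha Haa' b'; exact (compatible_above_mono (Ha b') Haa'). Qed.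

Lemma compatible_at_exists (b : bp_idx Y) : exists a, compatible_at b a.
Proof.
  destruct (@bp_cofinite _ Y b) as [l Hl].
  destruct (directed_list_meet (compatible_above b) l (bp_dir X)) as [a Ha].
  - intros b' _; apply compatible_above_exists.
  - intros b' a a'; apply compatible_above_mono.
  - exists a; intros b' h; exact (Ha b' (Hl b' h) h).
Qed.

Lemma representing_pair {alpha : bp_idx Y -> bp_idx X} :
  strictly_increasing alpha -> (forall b, compatible_at b (alpha b)) ->
  exists p : BarPair X Y, ProHom_eq (i_pair p) g.
Proof.
  intros Hincr Hcompat.
  assert (Ht : forall b, ple (germ_index b) (alpha b))
    by (intros b; destruct (Hcompat b b (ple_refl b)) as [hb _]; exact hb).
  set (phi b := comp (germ_map b) (dmap (bp_diag X) (Ht b))).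
  assert (Hnat : forall b b' (h : ple b' b) (h' : ple (alpha b') (alpha b)),
             comp (dmap (bp_diag Y) h) (phi b) = comp (phi b') (dmap (bp_diag X) h')).
  { intros b b' h h'; destruct (Hcompat b b' h) as [hb [hb' E]].
    unfold phi; rewrite comp_assoc, (dmap_irrelevant (bp_diag X) (Ht b) hb), E,
      <- comp_assoc, <- (dmap_comp (bp_diag X) h' (Ht b') hb').
    reflexivity. }
  exists {| bpa := alpha; bpa_incr := Hincr; bpphi := phi; bpphi_nat := Hnat |}.
  intros s; exists (alpha s), (ple_refl _), (Ht s); simpl.
  rewrite dmap_id; apply comp_idr.
Qed.
End RepresentingPair.

Theorem proposition3p4 :
  forall (C : Category) (X Y : BarProObj C) (g : ProHom (i_obj X) (i_obj Y)),
    exists p : BarPair X Y, ProHom_eq (i_pair p) g.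
Proof.
  intros C X Y g.
  destruct (strictly_increasing_choice (bp_dir X)
              (exists_plt (bp_dir X) (@bp_cofinite _ X) (@bp_infheight _ X))
              (@bp_cofinite _ Y) _ (compatible_at_exists g) (@compatible_at_mono _ _ _ g))
    as [alpha [Hincr Hcompat]].
  exact (representing_pair g Hincr Hcompat).
Qed.
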